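(* Let $\mathcal{A}$ be an abelian group with $|\mathcal{A}|\ge 3$ and let $G$ be a generalized sun graph. Then $G$ is $\mathcal{A}$-vertex magic if and only if every non-pendant vertex of $G$ is a support vertex. Further, if every non-pendant vertex of $G$ is a support vertex of odd degree, then $G$ is group vertex magic.
   Context: Graphs are finite, simple, undirected. A unicyclic graph is a connected graph with exactly one cycle. A generalized sun is a unicyclic graph $G=(V,E)$ whose unique cycle $C_k$ satisfies $k<|V|$ and such that every vertex not on $C_k$ is pendant (has degree $1$). A support vertex is a vertex adjacent to a pendant vertex. For an additive abelian group $\mathcal{A}$ with identity $0$, a map $\ell:V\to\mathcal{A}\setminus\{0\}$ is an $\mathcal{A}$-vertex magic labeling if there is $\mu\in\mathcal{A}$ with $\sum_{u\in N(v)}\ell(u)=\mu$ for all $v\in V$; $G$ is $\mathcal{A}$-vertex magic if such a labeling exists, and group vertex magic if it is $\mathcal{A}$-vertex magic for every nontrivial abelian group $\mathcal{A}$. *)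

From HB Require Import structures.
From mathcomp Require Import all_boot all_order all_algebra.
Set Implicit Arguments. Unset Strict Implicit. Unset Printing Implicit Defensive.
Import GRing.Theory.

(* A finite simple undirected graph is given by a vertex type T : finType and
   an adjacency relation e : rel T, assumed symmetric and irreflexive
   (these are explicit hypotheses of the theorem). *)

Section Graphs.
Variable T : finType.
Variable e : rel T.

Definition nbhd (v : T) : {set T} := [set u | e v u].
Definition deg (v : T) : nat := #|nbhd v|.

Definition pendant (v : T) : bool := deg v == 1.
Definition support_vertex (v : T) : bool := [exists u, e v u && pendant u].

Definition connected_graph : Prop := forall x y : T, connect e x y.

Definition is_cycle (c : seq T) : bool :=
  [&& uniq c, 3 <= size c & cycle e c].

(* The edge set of the cycle subgraph (both orientations of each edge);
   two vertex sequences describe the same cycle iff these sets agree. *)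
Definition cycle_edges (c : seq T) : {set T * T} :=
  [set p | ((p.1 \in c) && (p.2 == next c p.1))
           || ((p.2 \in c) && (p.1 == next c p.2))].

Definition unique_cycle (c : seq T) : Prop :=
  is_cycle c /\ forall c', is_cycle c' -> cycle_edges c' = cycle_edges c.

Definition unicyclic : Prop := connected_graph /\ exists c, unique_cycle c.

Definition gen_sun : Prop :=
  connected_graph /\
  exists c, [/\ unique_cycle c, size c < #|T| &
                forall v, v \notin c -> pendant v].

Definition vertex_magic_labeling (A : zmodType) (l : T -> A) : Prop :=
  (forall v, l v != 0%R) /\
  exists mu : A, forall v, (\sum_(u in nbhd v) l u)%R = mu.

Definition vertex_magic (A : zmodType) : Prop :=
  exists l : T -> A, vertex_magic_labeling l.

Definition group_vertex_magic : Prop :=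
  forall A : zmodType, (exists a : A, a != 0%R) -> vertex_magic A.

End Graphs.

From mathcomp Require Import all_boot all_order all_algebra.
Set Implicit Arguments. Unset Strict Implicit. Unset Printing Implicit Defensive.
Import GRing.Theory.

(* In a generalized sun the non-pendant vertices are exactly the cycle
   vertices, the cycle has no chord (a chord would close a second cycle), so
   every cycle vertex has exactly two non-pendant neighbours, and every pendant
   vertex hangs off a cycle vertex.
   If l is magic with constant mu, the only neighbour of a pendant vertex is a
   support vertex z, so l z = mu.  Walking from a support vertex to a
   non-support cycle vertex we meet a non-support cycle vertex y adjacent to a
   support vertex, and the sum mu at y forces its other neighbour's label to 0.
   Conversely, label every cycle vertex a and split -a into nonzero labels on
   the pendant neighbours of each cycle vertex: every vertex then sees a.
   A nonzero t splits into nonzero summands over any odd number of places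
   (t, -t, t, ..., t), and over any positive number of places once some b is
   neither 0 nor t (put b first and split t - b over the rest). *)

Section Graphs.
Variables (T : finType) (e : rel T).

Definition pendants : {set T} := [set u | pendant e u].

Lemma pendant_nbhd w u : pendant e w -> e w u -> nbhd e w = [set u].
Proof.
move=> /cards1P[x nbw] ewu.
have : u \in nbhd e w by rewrite inE.
by rewrite nbw inE => /eqP <-.
Qed.

Lemma pendant_adj w : pendant e w -> exists u, e w u.
Proof.
move=> /cards1P[u nbw]; exists u.
have : u \in nbhd e w by rewrite nbw set11.
by rewrite inE.
Qed.

Lemma nbhdD_pendants_nonsupport v :
  ~~ support_vertex e v -> nbhd e v :\: pendants = nbhd e v.
Proof.
move=> nsv; apply/setP => u; rewrite !inE andbC.
have [evu|] //= := boolP (e v u).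
by apply: contraNN nsv => pu; apply/existsP; exists u; rewrite evu.
Qed.

Lemma connect_cross (a : {pred T}) x y :
  connect e x y -> x \notin a -> y \in a ->
  exists z z', [/\ e z z', z \notin a & z' \in a].
Proof.
case/connectP => p; elim: p x => [|z p IH] x /=; first by move=> _ -> /negbTE ->.
case/andP=> exz zp ylast xa ya.
have [za|zNa] := boolP (z \in a); first by exists x, z.
exact: IH zp ylast zNa ya.
Qed.

End Graphs.

Lemma next_neq_prev (T : eqType) (c : seq T) x :
  uniq c -> 2 < size c -> x \in c -> next c x != prev c x.
Proof.
move=> uc sc /rot_to[i s def_c].
rewrite -(next_rot i uc) -(prev_rot i uc) def_c.
have : uniq (x :: s) by rewrite -def_c rot_uniq.
have : 2 < size (x :: s) by rewrite -def_c size_rot.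
case: s {def_c} => [|y [|z s]] // _ uc'.
have /andP[] := uc'; rewrite !inE !negb_or => /and3P[xy xz _] _.
have next_x : next [:: x, y, z & s] x = y by rewrite /next /= eqxx.
have next_y : next [:: x, y, z & s] y = z by rewrite /next /= eq_sym (negbTE xy) eqxx.
apply/eqP => eq_np; have := next_prev uc' x.
by rewrite -eq_np next_x next_y => /eqP; rewrite eq_sym (negbTE xz).
Qed.

Lemma exists_neq2 (U : eqType) (a b c x y : U) :
  a != b -> b != c -> a != c -> exists2 z, z != x & z != y.
Proof.
move=> ab bc ac.
have [->|ax] := eqVneq x a.
  have [->|yb] := eqVneq y b; first by exists c; rewrite eq_sym.
  by exists b; rewrite // eq_sym.
have [->|ay] := eqVneq y a; last by exists a; rewrite eq_sym.
have [->|xb] := eqVneq x b; first by exists c; rewrite eq_sym.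
by exists b; rewrite // eq_sym.
Qed.

Section NonzeroSums.
Variables (T : finType) (A : zmodType).
Local Open Scope ring_scope.

Definition nz_sum_on (S : {set T}) (t : A) : Prop :=
  exists f : T -> A, {in S, forall y, f y != 0} /\ \sum_(y in S) f y = t.

Lemma nz_sum_onD1 (S : {set T}) x (s t : A) :
  x \in S -> s != 0 -> nz_sum_on (S :\ x) (t - s) -> nz_sum_on S t.
Proof.
move=> xS s0 [f [f0 sum_f]].
exists (fun y => if y == x then s else f y); split.
  move=> y yS; case: ifP => [//|/negbT yx].
  by apply: f0; rewrite !inE yx.
rewrite (big_setD1 x) //= eqxx (eq_bigr f) => [|y]; first by rewrite sum_f addrC subrK.
by rewrite !inE => /andP[/negbTE->].
Qed.

Lemma nz_sum_on_odd (S : {set T}) (t : A) : odd #|S| -> t != 0 -> nz_sum_on S t.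
Proof.
have [n] := ubnP #|S|; elim: n S => // n IH S ltSn oddS t0.
have /card_gt0P[x xS] : (0 < #|S|)%N by case: #|S| oddS.
have [Sx0|/set0Pn[y yS]] := eqVneq (S :\ x) set0.
  by exists (fun=> t); split=> [y _ //|]; rewrite (big_setD1 x) //= Sx0 big_set0 addr0.
apply: (nz_sum_onD1 xS t0); apply: (nz_sum_onD1 yS (_ : - t != 0)).
  by rewrite oppr_eq0.
rewrite subrr sub0r opprK; apply: IH => //.
  by move: ltSn; rewrite (cardsD1 x S) (cardsD1 y (S :\ x)) xS yS !add1n ltnS => /ltnW.
by move: oddS; rewrite (cardsD1 x S) (cardsD1 y (S :\ x)) xS yS /= negbK.
Qed.

Lemma nz_sum_on_gt0 (S : {set T}) (t : A) :
  (exists2 b : A, b != 0 & b != t) -> (0 < #|S|)%N -> t != 0 -> nz_sum_on S t.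
Proof.
move=> [b b0 bt] /card_gt0P[x xS] t0.
have [oddS|evenS] := boolP (odd #|S|); first exact: nz_sum_on_odd.
apply: (nz_sum_onD1 xS b0); apply: nz_sum_on_odd; last by rewrite subr_eq0 eq_sym.
by move: evenS; rewrite (cardsD1 x S) xS /= negbK.
Qed.

End NonzeroSums.

Section GeneralizedSun.
Variables (T : finType) (e : rel T) (c : seq T).
Hypotheses (e_sym : symmetric e) (e_irr : irreflexive e).
Hypothesis c_unique : unique_cycle e c.
Hypothesis off_cycle_pendant : forall v, v \notin c -> pendant e v.

Lemma cycle_nonpendant x : x \in c -> ~~ pendant e x.
Proof.
case: c_unique => /and3P[uc sc cyc] _ xc.
have sub_nbhd : [set next c x; prev c x] \subset nbhd e x.
  apply/subsetP => y; rewrite !inE => /orP[] /eqP->; first exact: next_cycle.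
  by rewrite e_sym; apply: prev_cycle.
have := subset_leq_card sub_nbhd; rewrite cards2 next_neq_prev //.
by rewrite /pendant /deg; apply: contraTN => /eqP->.
Qed.

Lemma nonpendant_in_cycle v : ~~ pendant e v -> v \in c.
Proof. by apply: contraR; apply: off_cycle_pendant. Qed.

Lemma cycle_chordless v u :
  v \in c -> u \in c -> e v u -> (u == next c v) || (u == prev c v).
Proof.
case: c_unique => /and3P[uc _ cyc] c_uniq vc uc_in evu.
apply: contraT; rewrite negb_or => /andP[u_next u_prev].
have [i s def_c] := rot_to vc.
have us : u \in s.
  have uv : u != v by apply: contraTneq evu => ->; rewrite e_irr.
  by move: uc_in; rewrite -(mem_rot i) def_c inE (negbTE uv).
have uvs : uniq (v :: s) by rewrite -def_c rot_uniq.
have cyc_vs : cycle e (v :: s) by rewrite -def_c rot_cycle.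
have u_next' : u != next (v :: s) v by rewrite -def_c next_rot.
case/splitPr: us uvs cyc_vs u_next' => [[|a s1] s2] uvs cyc_vs u_next'.
  by rewrite /next /= !eqxx in u_next'.
pose c' := [:: u, v, a & s1].
have c'_cycle : is_cycle e c'.
  move: uvs; rewrite -cat_cons cat_uniq => /and3P[uniq_vas /norP[u_vas _] _].
  rewrite /is_cycle cons_uniq u_vas uniq_vas /= (e_sym u v) evu rcons_path.
  by move: cyc_vs; rewrite /= rcons_cat cat_path /= => /and4P[-> -> -> _].
have : (u, v) \in cycle_edges c' by rewrite inE /= mem_head /next /= !eqxx.
rewrite (c_uniq _ c'_cycle) inE /= => /orP[] /andP[_ /eqP def].
  by move: u_prev; rewrite def prev_next // eqxx.
by rewrite def eqxx in u_next.
Qed.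

Lemma nbhdD_pendants v :
  ~~ pendant e v -> nbhd e v :\: pendants e = [set next c v; prev c v].
Proof.
move=> npv; have vc := nonpendant_in_cycle npv.
case: c_unique => /and3P[_ _ cyc] _.
apply/setP => u; rewrite !inE; apply/andP/orP => [[npu evu]|].
  exact/orP/(cycle_chordless vc (nonpendant_in_cycle npu) evu).
case=> /eqP->; split.
- by rewrite cycle_nonpendant ?mem_next.
- exact: next_cycle.
- by rewrite cycle_nonpendant ?mem_prev.
- by rewrite e_sym; apply: prev_cycle.
Qed.

Lemma deg_nonpendant v :
  ~~ pendant e v -> deg e v = #|nbhd e v :&: pendants e| + 2.
Proof.
move=> npv; case: c_unique => /and3P[uc sc _] _.
rewrite /deg -(cardsID (pendants e) (nbhd e v)) nbhdD_pendants // cards2.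
by rewrite next_neq_prev // nonpendant_in_cycle.
Qed.

Hypothesis connected : connected_graph e.

Lemma pendant_adj_nonpendant w u : pendant e w -> e w u -> ~~ pendant e u.
Proof.
move=> pw ewu; apply/negP => pu.
have nbhd_wu y : y \in [set w; u] -> nbhd e y \subset [set w; u].
  rewrite !inE => /orP[] /eqP->.
    by rewrite (pendant_nbhd pw ewu) sub1set !inE eqxx orbT.
  by rewrite (pendant_nbhd pu (_ : e u w)) ?sub1set ?inE ?eqxx // e_sym.
have xc : nth w c 0 \in c.
  by apply: mem_nth; case: c_unique => /and3P[_ sc _] _; apply: leq_trans sc.
have [||z [z' [ezz' /negPn zwu z'wu]]] :=
  @connect_cross _ e [predC [set w; u]] _ _ (connected w (nth w c 0)).
- by rewrite !inE eqxx.
- rewrite !inE; apply/norP.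
  by split; apply: contraTneq (cycle_nonpendant xc) => ->; rewrite negbK.
by move: z'wu; rewrite inE (subsetP (nbhd_wu z zwu)) // inE.
Qed.

Hypothesis c_small : size c < #|T|.

Lemma exists_pendant : exists w, pendant e w.
Proof.
have /existsP[w wNc] : [exists w, w \notin c].
  apply: contraLR c_small => /existsPn allc; rewrite -leqNgt.
  apply: leq_trans (card_size c); apply/subset_leq_card/subsetP => y _.
  exact/negPn/allc.
by exists w; apply: off_cycle_pendant.
Qed.

Local Open Scope ring_scope.

Lemma support_of_vertex_magic (A : zmodType) :
  vertex_magic e A -> forall v, ~~ pendant e v -> support_vertex e v.
Proof.
case=> l [l0 [mu sum_l]] v npv; apply: contraT => nsv.
have l_support z : support_vertex e z -> l z = mu.
  case/existsP=> w /andP[ezw pw].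
  by rewrite -(sum_l w) (pendant_nbhd pw (_ : e w z)) ?big_set1 // e_sym.
have [w pw] := exists_pendant.
have [u ewu] := pendant_adj pw.
have su : support_vertex e u by apply/existsP; exists w; rewrite e_sym ewu pw.
pose B := [pred y | ~~ pendant e y && ~~ support_vertex e y].
have [||z [y [ezy zNB /andP[npy nsy]]]] := connect_cross (a := B) (connected u v).
- by rewrite inE /= su andbF.
- by rewrite inE /= npv nsv.
have sz : support_vertex e z.
  move: zNB; rewrite inE /= negb_and !negbK => /orP[pz|//].
  by case/negP: nsy; apply/existsP; exists z; rewrite e_sym ezy pz.
have nbhd_y : nbhd e y = [set next c y; prev c y].
  by rewrite -(nbhdD_pendants_nonsupport nsy) nbhdD_pendants.
have zy : z \in nbhd e y by rewrite inE e_sym.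
have : l (next c y) + l (prev c y) = mu.
  case: c_unique => /and3P[uc sc _] _.
  rewrite -(sum_l y) nbhd_y big_setU1 ?big_set1 //= inE.
  by rewrite next_neq_prev // nonpendant_in_cycle.
rewrite nbhd_y !inE in zy.
case/orP: zy => /eqP zE; rewrite -zE (l_support z sz) => sum2.
  by move: (l0 (prev c y)); rewrite -(addKr mu (l (prev c y))) sum2 addNr eqxx.
by move: (l0 (next c y)); rewrite -(addrK mu (l (next c y))) sum2 subrr eqxx.
Qed.

Lemma vertex_magic_of_pendant_sums (A : zmodType) (a : A) : a != 0 ->
  (forall v, ~~ pendant e v -> nz_sum_on (nbhd e v :&: pendants e) (- a)) ->
  vertex_magic e A.
Proof.
move=> a0 sums.
have f_ex v : exists g : T -> A, ~~ pendant e v ->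
    {in nbhd e v :&: pendants e, forall w, g w != 0} /\
    \sum_(w in nbhd e v :&: pendants e) g w = - a.
  have [pv|/sums[g g_sum]] := boolP (pendant e v); last by exists g.
  by exists (fun=> 0) => /negP[].
have [f f_sum] := fin_all_exists f_ex.
(* Summing over the singleton neighbourhood of a pendant vertex w reads off
   the label that its unique neighbour chose for w, without naming it. *)
pose l w := if pendant e w then \sum_(u in nbhd e w) f u w else a.
have l_pendant w u : pendant e w -> e w u -> l w = f u w.
  by move=> pw ewu; rewrite /l pw (pendant_nbhd pw ewu) big_set1.
have l_cycle x : x \in c -> l x = a by move/cycle_nonpendant/negbTE; rewrite /l => ->.
exists l; split.
  move=> w; have [pw|npw] := boolP (pendant e w); last by rewrite /l (negbTE npw).
  have [u ewu] := pendant_adj pw.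
  rewrite (l_pendant _ _ pw ewu); apply: (f_sum u (pendant_adj_nonpendant pw ewu)).1.
  by rewrite !inE e_sym ewu pw.
exists a => v; have [pv|npv] := boolP (pendant e v).
  have [u evu] := pendant_adj pv.
  by rewrite (pendant_nbhd pv evu) big_set1 /l (negbTE (pendant_adj_nonpendant pv evu)).
case: c_unique => /and3P[uc sc _] _; have vc := nonpendant_in_cycle npv.
rewrite (big_setID (pendants e)) nbhdD_pendants //= big_setU1 ?big_set1 //=; last first.
  by rewrite inE next_neq_prev.
rewrite (eq_bigr (f v)) => [|w].
  by rewrite (f_sum v npv).2 !l_cycle ?mem_next ?mem_prev // addKr.
rewrite !inE => /andP[evw pw].
by apply: l_pendant; rewrite // e_sym.
Qed.

End GeneralizedSun.

Theorem lemma2p5 (T : finType) (e : rel T)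
  (e_sym : symmetric e) (e_irr : irreflexive e)
  (A : zmodType) (hA : exists a b c : A, [/\ a != b, b != c & a != c])
  (hG : gen_sun e) :
  (vertex_magic e A <-> (forall v, ~~ pendant e v -> support_vertex e v)) /\
  ((forall v, ~~ pendant e v -> support_vertex e v && odd (deg e v)) ->
     group_vertex_magic e).
Proof.
case: hG => connected [c [c_unique c_small off_cycle_pendant]].
have magic_of_sums := vertex_magic_of_pendant_sums e_sym e_irr c_unique
  off_cycle_pendant connected.
have [a [b [d [ab bd ad]]]] := hA.
split; [split|].
- by move=> magic; apply: (support_of_vertex_magic e_sym e_irr c_unique
    off_cycle_pendant connected c_small magic).
- move=> supp; have [z z0 _] := exists_neq2 0%R 0%R ab bd ad.
  apply: (magic_of_sums _ _ z0) => v npv.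
  have /existsP[u /andP[evu pu]] := supp v npv.
  apply: nz_sum_on_gt0; first exact: exists_neq2 ab bd ad.
    by apply/card_gt0P; exists u; rewrite !inE evu pu.
  by rewrite oppr_eq0.
- move=> supp_odd A' [a' a'0]; apply: (magic_of_sums _ _ a'0) => v npv.
  apply: nz_sum_on_odd; last by rewrite oppr_eq0.
  have /andP[_] := supp_odd v npv.
  by rewrite (deg_nonpendant e_sym e_irr c_unique off_cycle_pendant npv) addn2 /= negbK.
Qed.
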